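(* Let a single bidder have a valuation with a continuously differentiable, positive density $f$ on $[0,1]$ and cdf $F$, satisfying the monotone hazard rate condition, i.e. $(1-F(r))/f(r)$ is non-increasing in $r$. For $r\in[0,1]$ let $x(r)=\int_r^1 v f(v)\,dv$ and $y(r)=r\int_r^1 f(v)\,dv$ (the welfare and revenue of the take-it-or-leave-it price $r$). Then for all $r\in(0,1)$, $$x'(r)\,y''(r)-y'(r)\,x''(r)\ \ge\ 0,$$ i.e. the curve $r\mapsto (x(r),y(r))$ (the set of (welfare, revenue) points of all single-bidder deterministic mechanisms) is locally convex.
   Context: For a single bidder, every deterministic truthful mechanism is a posted price $r$: the bidder gets the item and pays $r$ iff her value is at least $r$. *)

From Stdlib Require Import Reals Lra ClassicalEpsilon.
Open Scope R_scope.

(* Total Riemann integral: the Riemann integral of f from a to b when f is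
   Riemann integrable there (value independent of the integrability proof),
   and 0 otherwise. *)
Definition Rint (f : R -> R) (a b : R) : R :=
  match excluded_middle_informative (exists _ : Riemann_integrable f a b, True) with
  | left H => RiemannInt (proj1_sig (constructive_indefinite_description _ H))
  | right _ => 0
  end.

Definition cdf (f : R -> R) (r : R) : R := Rint f 0 r.

Definition welfare (f : R -> R) (r : R) : R := Rint (fun v => v * f v) r 1.

Definition revenue (f : R -> R) (r : R) : R := r * Rint f r 1.

From Stdlib Require Import Reals Lra ClassicalEpsilon.
From Coquelicot Require Import Coquelicot.
Open Scope R_scope.

(* Write G(r) = int_r^1 f = 1 - F(r) for the tail mass.  By the
   fundamental theorem of calculus x' = -r f, y' = G - r f, hence
   x'' = -(f + r f') and y'' = -2 f - r f', and a direct computation gives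
       x' y'' - y' x''  =  G f + r (f^2 + f' G).
   The first term is non-negative since f > 0.  The second is non-negative
   because the monotone hazard rate condition says that G / f is
   non-increasing, so its derivative -(f^2 + f' G) / f^2 is non-positive. *)

Lemma Rint_RInt (g : R -> R) (a b : R) : ex_RInt g a b -> Rint g a b = RInt g a b.
Proof.
  intros Hint. unfold Rint.
  destruct (excluded_middle_informative _) as [Hex | Hnex].
  - destruct (constructive_indefinite_description _ Hex) as [pr ?]; simpl.
    symmetry; apply RInt_Reals.
  - exfalso; apply Hnex; exists (ex_RInt_Reals_0 _ _ _ Hint); exact I.
Qed.

Lemma ex_RInt_continuous_on (g : R -> R) (c d a b : R) :
  (forall t, c <= t <= d -> continuity_pt g t) ->
  c <= a <= d -> c <= b <= d -> ex_RInt g a b.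
Proof.
  intros Hg Ha Hb. apply (@ex_RInt_continuous R_CompleteNormedModule).
  intros z Hz. apply continuity_pt_filterlim, Hg.
  assert (c <= Rmin a b) by (apply Rmin_glb; lra).
  assert (Rmax a b <= d) by (apply Rmax_lub; lra).
  lra.
Qed.

Lemma locally_open_interval (a b r : R) (P : R -> Prop) :
  a < r < b -> (forall y, a < y < b -> P y) -> locally r P.
Proof.
  intros Hr HP.
  assert (Hrad : 0 < Rmin (r - a) (b - r)) by (apply Rmin_glb_lt; lra).
  exists (mkposreal _ Hrad). intros y Hy. apply HP.
  change (Rabs (y - r) < Rmin (r - a) (b - r)) in Hy.
  apply Rabs_lt_between' in Hy.
  pose proof (Rmin_l (r - a) (b - r)); pose proof (Rmin_r (r - a) (b - r)). lra.
Qed.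

Lemma derivable_pt_lim_interval_ext (g h : R -> R) (a b r l : R) :
  a < r < b -> (forall y, a < y < b -> g y = h y) ->
  derivable_pt_lim g r l -> derivable_pt_lim h r l.
Proof.
  intros Hr Heq Hg. apply is_derive_Reals, (is_derive_ext_loc g).
  - now apply (locally_open_interval a b).
  - now apply is_derive_Reals.
Qed.

(* If g does not exceed g r anywhere on [r,b], its derivative at r is non-positive:
   otherwise the right difference quotients would eventually be positive. *)
Lemma derivative_nonpos_of_right_max (g : R -> R) (b r l : R) :
  r < b -> (forall s, r <= s <= b -> g s <= g r) ->
  derivable_pt_lim g r l -> l <= 0.
Proof.
  intros Hrb Hmax Hg. destruct (Rle_or_lt l 0) as [Hl | Hl]; [exact Hl | exfalso].
  destruct (Hg l Hl) as [delta Hdelta].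
  pose proof (cond_pos delta) as Hdpos.
  set (h := Rmin (delta / 2) ((b - r) / 2)).
  assert (Hh : 0 < h) by (apply Rmin_glb_lt; lra).
  assert (h <= (b - r) / 2) by apply Rmin_r.
  assert (h <= delta / 2) by apply Rmin_l.
  assert (Hquot : Rabs ((g (r + h) - g r) / h - l) < l)
    by (apply Hdelta; [lra | rewrite Rabs_right; lra]).
  assert (Hdecr : g (r + h) <= g r) by (apply Hmax; lra).
  set (q := (g (r + h) - g r) / h) in *.
  assert (q * h = g (r + h) - g r) by (unfold q; field; lra).
  apply Rabs_lt_between' in Hquot. nra.
Qed.

Lemma Rint_tail_derive (g : R -> R) (t : R) :
  (forall s, 0 <= s <= 1 -> continuity_pt g s) -> 0 < t < 1 ->
  derivable_pt_lim (fun s => Rint g s 1) t (- g t).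
Proof.
  intros Hg Ht. apply is_derive_Reals, (is_derive_RInt' g _ t 1).
  - apply (locally_open_interval 0 1); [exact Ht |].
    intros y Hy.
    assert (Hint : ex_RInt g y 1) by (apply (ex_RInt_continuous_on g 0 1 y 1 Hg); lra).
    rewrite Rint_RInt by exact Hint. exact (@RInt_correct R_CompleteNormedModule _ _ _ Hint).
  - apply continuity_pt_filterlim, Hg; lra.
Qed.

Section PostedPrice.

Variables f f' : R -> R.
Hypothesis Hder : forall t, 0 <= t <= 1 -> derivable_pt_lim f t (f' t).
Hypothesis Hpos : forall t, 0 <= t <= 1 -> 0 < f t.
Hypothesis Hdens : Rint f 0 1 = 1.

Lemma density_continuous (t : R) : 0 <= t <= 1 -> continuity_pt f t.
Proof. intros Ht. exact (derivable_continuous_pt f t (exist _ (f' t) (Hder t Ht))). Qed.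

Lemma density_integrable (a b : R) : 0 <= a <= 1 -> 0 <= b <= 1 -> ex_RInt f a b.
Proof. apply (ex_RInt_continuous_on f 0 1), density_continuous. Qed.

Lemma tail_nonneg (t : R) : 0 <= t <= 1 -> 0 <= Rint f t 1.
Proof.
  intros Ht. rewrite Rint_RInt by (apply density_integrable; lra).
  apply RInt_ge_0; [lra | apply density_integrable; lra |].
  intros s Hs; left; apply Hpos; lra.
Qed.

Lemma derive_id_mul (t : R) :
  0 <= t <= 1 -> derivable_pt_lim (fun v => v * f v) t (1 * f t + t * f' t).
Proof.
  intros Ht. apply (derivable_pt_lim_mult id f); [apply derivable_pt_lim_id | auto].
Qed.

Lemma tail_derive (t : R) : 0 < t < 1 -> derivable_pt_lim (fun s => Rint f s 1) t (- f t).
Proof.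
  intros Ht. apply Rint_tail_derive; [exact density_continuous | exact Ht].
Qed.

Lemma welfare_derive (t : R) : 0 < t < 1 -> derivable_pt_lim (welfare f) t (- (t * f t)).
Proof.
  intros Ht. apply (Rint_tail_derive (fun v => v * f v)); [| exact Ht].
  intros s Hs. apply (derivable_continuous_pt _ s (exist _ _ (derive_id_mul s Hs))).
Qed.

Lemma revenue_derive (t : R) :
  0 < t < 1 -> derivable_pt_lim (revenue f) t (1 * Rint f t 1 + t * - f t).
Proof.
  intros Ht. apply (derivable_pt_lim_mult id (fun s => Rint f s 1));
    [apply derivable_pt_lim_id | now apply tail_derive].
Qed.

Lemma survival_tail (t : R) : 0 <= t <= 1 -> 1 - cdf f t = Rint f t 1.
Proof.
  intros Ht. unfold cdf.
  assert (Hmass := Hdens).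
  rewrite Rint_RInt in Hmass by (apply density_integrable; lra).
  rewrite <- (RInt_Chasles f 0 t 1) in Hmass by (apply density_integrable; lra).
  rewrite !Rint_RInt by (apply density_integrable; lra).
  unfold plus in Hmass; simpl in Hmass. lra.
Qed.

(* Monotone hazard rate at an interior point r: since G / f is non-increasing,
   its derivative -(f^2 + f' G) / f^2 is non-positive, i.e. f^2 + f' G >= 0. *)
Lemma mhr_pointwise (r : R) :
  (forall r s, 0 <= r -> r <= s -> s <= 1 ->
     (1 - cdf f s) / f s <= (1 - cdf f r) / f r) ->
  0 < r < 1 -> 0 <= f r * f r + f' r * Rint f r 1.
Proof.
  intros Hmhr Hr.
  assert (Hfr : 0 < f r) by (apply Hpos; lra).
  assert (Hhazard : derivable_pt_lim (fun s => (1 - cdf f s) / f s) r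
                      ((- f r * f r - f' r * Rint f r 1) / (f r)²)).
  { apply (derivable_pt_lim_interval_ext (fun s => Rint f s 1 / f s) _ 0 1); [exact Hr | |].
    - intros y Hy. rewrite survival_tail by lra. reflexivity.
    - apply (derivable_pt_lim_div (fun s => Rint f s 1) f); [now apply tail_derive | apply Hder; lra | lra]. }
  assert (Hnonpos : (- f r * f r - f' r * Rint f r 1) / (f r)² <= 0).
  { apply (derivative_nonpos_of_right_max (fun s => (1 - cdf f s) / f s) 1 r); [lra | | exact Hhazard].
    intros s Hs. apply Hmhr; lra. }
  assert (Hsq : 0 < (f r)²) by (unfold Rsqr; nra).
  replace (f r * f r + f' r * Rint f r 1)
    with (- ((- f r * f r - f' r * Rint f r 1) / (f r)²) * (f r)²) by (field; lra).
  nra.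
Qed.

End PostedPrice.

Lemma curvature_identity (r fr f'r G : R) :
  let x1 := - (r * fr) in let y1 := 1 * G + r * - fr in
  let x2 := - (1 * fr + r * f'r) in let y2 := - fr - (1 * fr + r * f'r) in
  x1 * y2 - y1 * x2 = G * fr + r * (fr * fr + f'r * G).
Proof. simpl. ring. Qed.

Theorem proposition1
  (f f' : R -> R)
  (* f is continuously differentiable on [0,1] with derivative f' *)
  (Hder : forall t, 0 <= t <= 1 -> derivable_pt_lim f t (f' t))
  (Hf'cont : forall t, 0 <= t <= 1 -> continuity_pt f' t)
  (* f is a positive density on [0,1] *)
  (Hpos : forall t, 0 <= t <= 1 -> 0 < f t)
  (Hdens : Rint f 0 1 = 1)
  (* monotone hazard rate: (1 - F r) / f r is non-increasing on [0,1] *)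
  (Hmhr : forall r s, 0 <= r -> r <= s -> s <= 1 ->
            (1 - cdf f s) / f s <= (1 - cdf f r) / f r)
  (* x1, x2 (resp. y1, y2) are the first and second derivatives of x (resp. y) on (0,1) *)
  (x1 x2 y1 y2 : R -> R)
  (Hx1 : forall t, 0 < t < 1 -> derivable_pt_lim (welfare f) t (x1 t))
  (Hx2 : forall t, 0 < t < 1 -> derivable_pt_lim x1 t (x2 t))
  (Hy1 : forall t, 0 < t < 1 -> derivable_pt_lim (revenue f) t (y1 t))
  (Hy2 : forall t, 0 < t < 1 -> derivable_pt_lim y1 t (y2 t)) :
  forall r, 0 < r < 1 -> x1 r * y2 r - y1 r * x2 r >= 0.
Proof.
  intros r Hr.
  assert (Ex1 : forall t, 0 < t < 1 -> x1 t = - (t * f t))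
    by (intros t Ht; exact (uniqueness_limite _ t _ _ (Hx1 t Ht) (welfare_derive f f' Hder t Ht))).
  assert (Ey1 : forall t, 0 < t < 1 -> y1 t = 1 * Rint f t 1 + t * - f t)
    by (intros t Ht; exact (uniqueness_limite _ t _ _ (Hy1 t Ht) (revenue_derive f f' Hder t Ht))).
  assert (Ex2 : x2 r = - (1 * f r + r * f' r)).
  { eapply uniqueness_limite; [now apply Hx2 |].
    apply (derivable_pt_lim_interval_ext (fun s => - (s * f s)) _ 0 1); [exact Hr | |].
    - intros y Hy. now rewrite Ex1.
    - apply derivable_pt_lim_opp, (derive_id_mul f f' Hder); lra. }
  assert (Ey2 : y2 r = - f r - (1 * f r + r * f' r)).
  { eapply uniqueness_limite; [now apply Hy2 |].
    apply (derivable_pt_lim_interval_ext (fun s => Rint f s 1 - s * f s) _ 0 1); [exact Hr | |].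
    - intros y Hy. rewrite Ey1 by exact Hy. ring.
    - apply derivable_pt_lim_minus; [now apply (tail_derive f f' Hder) | apply (derive_id_mul f f' Hder); lra]. }
  assert (Hmhr_r := mhr_pointwise f f' Hder Hpos Hdens r Hmhr Hr).
  assert (HG : 0 <= Rint f r 1) by (apply (tail_nonneg f f' Hder Hpos); lra).
  assert (Hfr : 0 < f r) by (apply Hpos; lra).
  rewrite Ex1, Ey1, Ex2, Ey2 by exact Hr.
  rewrite (curvature_identity r (f r) (f' r) (Rint f r 1)).
  apply Rle_ge, Rplus_le_le_0_compat; apply Rmult_le_pos; lra.
Qed.
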